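(* Let $A\in\mathbb{C}^{n\times n}$ be accretive and $\theta\in[0,\pi/2)\cap\Psi(A)$. Let $A_h=(A+A^* )/2$ and $A_s=(A-A^* )/(2j)$. Then $\gamma_\theta(A)=\max\{\sqrt{g^\star},\sqrt{h^\star}\}$, where $g^\star$ and $h^\star$ are the optimal values of the semidefinite programs $$\min_{g,\tau}\ g\quad\text{s.t.}\quad A^*A-gI+\tau(-A_h\tan\theta+A_s)\le0,\ \tau\ge0,\ g\ge0,$$ $$\min_{h,\tau}\ h\quad\text{s.t.}\quad A^*A-hI+\tau(-A_h\tan\theta-A_s)\le0,\ \tau\ge0,\ h\ge0.$$
   Context: Matrix inequality $\le0$ means negative semidefinite. For sectorial $A$ (i.e. $0\notin\{x^*Ax:\|x\|=1\}$), write $A=T^*DT$ with $T$ nonsingular, $D$ diagonal unitary; the phases $\bar\phi(A)\ge\dots\ge\underline\phi(A)$ are the arguments of the diagonal entries of $D$ with $\bar\phi-\underline\phi<\pi$ and $(\bar\phi+\underline\phi)/2\in(-\pi,\pi]$, and $\Psi(A)=[\underline\phi(A),\bar\phi(A)]$. $A$ is accretive if it is sectorial with $\Psi(A)\subset(-\pi/2,\pi/2)$. $\mathcal{DW}(A)=\{(\mathrm{Re}\,x^*Ax,\mathrm{Im}\,x^*Ax,\|Ax\|^2):x\in\mathbb{C}^n,\|x\|=1\}$. For sectorial $A$ and $\theta\in[0,\pi)\cap\Psi(A)$, the constrained gain range is $\mathcal{R}_{\ge\theta}(A)=\{h\ge0:\ \exists z\in\mathbb{C},\ \angle z\notin(-\theta,\theta),\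 (\mathrm{Re}\,z,\mathrm{Im}\,z,h^2)\in\mathcal{DW}(A)\}$ (with $\angle z\in(-\pi,\pi]$), and the constrained gain is $\gamma_\theta(A)=\max\mathcal{R}_{\ge\theta}(A)$. *)

From HB Require Import structures.
From mathcomp Require Import all_boot all_order all_algebra.
From mathcomp Require Import all_classical all_reals.
From mathcomp Require Import sequences exp trigo.
From mathcomp Require Import complex.

Set Implicit Arguments.
Unset Strict Implicit.
Unset Printing Implicit Defensive.

Import Order.TTheory GRing.Theory Num.Theory.
Local Open Scope ring_scope.
Local Open Scope complex_scope.

Section Defs.
Variable R : realType.
Local Notation C := (R[i]).

Definition ctr (m n : nat) (A : 'M[C]_(m, n)) : 'M[C]_(n, m) :=
  (map_mx (fun z : C => z^*) A)^T.

Definition qform (n : nat) (M : 'M[C]_n) (x : 'cV[C]_n) : C :=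
  (ctr x *m M *m x) 0 0.

Definition sqnorm (n : nat) (x : 'cV[C]_n) : C := (ctr x *m x) 0 0.

(* negative semidefinite: M <= 0, i.e. x^* M x <= 0 (real and nonpositive) for all x *)
Definition nsd (n : nat) (M : 'M[C]_n) : Prop := forall x : 'cV[C]_n, qform M x <= 0.

Definition expj (phi : R) : C := cos phi +i* sin phi.

Definition is_angle (z : C) (phi : R) : Prop :=
  - pi < phi <= pi /\ z = `|z| * expj phi.

Definition sectorial (n : nat) (A : 'M[C]_n) : Prop :=
  forall x : 'cV[C]_n, sqnorm x = 1 -> qform A x != 0.

Definition phases (n : nat) (A : 'M[C]_n) (phi : 'I_n -> R) : Prop :=
  (exists T : 'M[C]_n, T \in unitmx /\
     A = ctr T *m diag_mx (\row_k expj (phi k)) *m T) /\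
  (exists imax imin : 'I_n,
     (forall k, phi imin <= phi k <= phi imax) /\
     phi imax - phi imin < pi /\
     - pi < (phi imax + phi imin) / 2 <= pi).

(* theta in Psi(A) = [min phase, max phase] *)
Definition in_phase_range (n : nat) (phi : 'I_n -> R) (theta : R) : Prop :=
  (exists i, phi i <= theta) /\ (exists i, theta <= phi i).

Definition accretive (n : nat) (A : 'M[C]_n) : Prop :=
  sectorial A /\ exists phi, phases A phi /\ forall k, - (pi / 2) < phi k < pi / 2.

Definition gain_range (n : nat) (A : 'M[C]_n) (theta : R) : set R :=
  [set h | 0 <= h /\ exists z : C,
      (forall phi, is_angle z phi -> ~ (- theta < phi < theta)) /\
      exists x : 'cV[C]_n, sqnorm x = 1 /\ qform A x = z /\
        sqnorm (A *m x) = (h ^+ 2)%:C].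

Definition is_max_of (S : set R) (m : R) : Prop :=
  S m /\ forall h, S h -> h <= m.

Definition herm_part (n : nat) (A : 'M[C]_n) : 'M[C]_n := (2%:R)^-1 *: (A + ctr A).
Definition skew_part (n : nat) (A : 'M[C]_n) : 'M[C]_n :=
  (2%:R * 'i)^-1 *: (A - ctr A).

(* feasible values of the two SDPs; sgn = 1 for the first, sgn = -1 for the second *)
Definition sdp_feasible (n : nat) (A : 'M[C]_n) (theta : R) (sgn : R) : set R :=
  [set g | 0 <= g /\ exists tau : R, 0 <= tau /\
     nsd (ctr A *m A - g%:C%:M
          + tau%:C *: (- ((tan theta)%:C *: herm_part A) + sgn%:C *: skew_part A))].

End Defs.

From HB Require Import structures.
From mathcomp Require Import all_boot all_order all_algebra.
From mathcomp Require Import all_classical all_reals.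
From mathcomp Require Import sequences exp trigo.
From mathcomp Require Import complex.
From mathcomp Require Import topology normedtype derive.
From mathcomp Require Import ring lra.
Import numFieldNormedType.Exports.
Import Order.TTheory GRing.Theory Num.Theory.
Local Open Scope ring_scope.
Local Open Scope complex_scope.
Set Implicit Arguments.
Unset Strict Implicit.
Unset Printing Implicit Defensive.

(* For a unit vector x let N(x) = |Ax|^2 and b_s(x) = -tan(theta) Re(x^*Ax) + s Im(x^*Ax),
   s = 1 or -1.  As A is accretive, Re(x^*Ax) > 0, so the phase of x^*Ax avoids
   (-theta, theta) exactly when b_1(x) >= 0 or b_-1(x) >= 0: the squared constrained gain
   is the larger of the maxima of N over the two sectors {b_s >= 0} of the (compact) unit
   sphere.  The s-th SDP constraint says N(x) - g|x|^2 + tau b_s(x) <= 0 for all x, and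
   the S-lemma turns "N < g on the sector" into the existence of such a tau; hence each
   SDP value is the corresponding sector maximum, or 0 for an empty sector.  The sector
   s = 1 is never empty since theta is at most the largest phase of A. *)

Section QuadraticForms.
Variable R : realType.
Local Notation C := R[i].
Local Notation Re := (@complex.Re R).
Local Notation Im := (@complex.Im R).

Lemma Re_sum (I : Type) (r : seq I) (P : pred I) (F : I -> C) :
  Re (\sum_(i <- r | P i) F i) = \sum_(i <- r | P i) Re (F i).
Proof. by apply: big_morph => // -[? ?] [? ?]. Qed.

Lemma Re_realM (k : R) (z : C) : Re (k%:C * z) = k * Re z.
Proof. by case: z => a b /=; ring. Qed.

Lemma Im_realM (k : R) (z : C) : Im (k%:C * z) = k * Im z.
Proof. by case: z => a b /=; ring. Qed.

Lemma conjcM_self (z : C) : conjc z * z = (Re z ^+ 2 + Im z ^+ 2)%:C.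
Proof. by case: z => a b; apply/eqP; rewrite eq_complex /=; apply/andP; split; apply/eqP; ring. Qed.

Lemma ctrM m n p (A : 'M[C]_(m, n)) (B : 'M[C]_(n, p)) : ctr (A *m B) = ctr B *m ctr A.
Proof.
apply/matrixP => i j; rewrite !mxE rmorph_sum; apply: eq_bigr => k _.
by rewrite !mxE rmorphM mulrC.
Qed.

Lemma ctrK m n (A : 'M[C]_(m, n)) : ctr (ctr A) = A.
Proof. by apply/matrixP => i j; rewrite !mxE conjcK. Qed.

Lemma ctrD m n (A B : 'M[C]_(m, n)) : ctr (A + B) = ctr A + ctr B.
Proof. by apply/matrixP => i j; rewrite !mxE rmorphD. Qed.

Lemma ctrZ m n (c : C) (A : 'M[C]_(m, n)) : ctr (c *: A) = conjc c *: ctr A.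
Proof. by apply/matrixP => i j; rewrite !mxE rmorphM. Qed.

Lemma ctr1 n : ctr (1%:M : 'M[C]_n) = 1%:M.
Proof. by apply/matrixP => i j; rewrite !mxE eq_sym; case: (i == j); rewrite ?conjc1 ?conjc0. Qed.

Definition sesq n (M : 'M[C]_n) (x y : 'cV[C]_n) : C := (ctr x *m M *m y) 0 0.

Lemma qformDl n (M1 M2 : 'M[C]_n) x : qform (M1 + M2) x = qform M1 x + qform M2 x.
Proof. by rewrite /qform mulmxDr mulmxDl mxE. Qed.

Lemma qformNl n (M : 'M[C]_n) x : qform (- M) x = - qform M x.
Proof. by rewrite /qform mulmxN mulNmx mxE. Qed.

Lemma qformZl n (c : C) (M : 'M[C]_n) x : qform (c *: M) x = c * qform M x.
Proof. by rewrite /qform -scalemxAr -scalemxAl mxE. Qed.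

Lemma qform_scalar n (c : C) (x : 'cV[C]_n) : qform c%:M x = c * sqnorm x.
Proof. by rewrite /qform /sqnorm mul_mx_scalar -scalemxAl mxE. Qed.

Lemma qform1 n (x : 'cV[C]_n) : qform 1%:M x = sqnorm x.
Proof. by rewrite qform_scalar mul1r. Qed.

Lemma qform_ctrMl n (T M : 'M[C]_n) x : qform (ctr T *m M *m T) x = qform M (T *m x).
Proof. by rewrite /qform ctrM !mulmxA. Qed.

Lemma qform_ctrM n (A : 'M[C]_n) x : qform (ctr A *m A) x = sqnorm (A *m x).
Proof. by rewrite -qform1 -qform_ctrMl mulmx1. Qed.

Lemma qform0r n (M : 'M[C]_n) : qform M 0 = 0.
Proof. by rewrite /qform mulmx0 mxE. Qed.

Lemma qformZr n (c : C) (M : 'M[C]_n) x : qform M (c *: x) = conjc c * c * qform M x.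
Proof. by rewrite /qform ctrZ -!scalemxAl -!scalemxAr !mxE mulrA. Qed.

Lemma qformZr_real n (k : R) (M : 'M[C]_n) x : qform M (k%:C *: x) = (k ^+ 2)%:C * qform M x.
Proof. by rewrite qformZr conjc_real -rmorphM expr2. Qed.

Lemma qformDr n (M : 'M[C]_n) x y :
  qform M (x + y) = qform M x + qform M y + sesq M x y + sesq M y x.
Proof. by rewrite /qform /sesq ctrD mulmxDl mulmxDr !mulmxDl !mxE; ring. Qed.

Lemma conjc_qform n (M : 'M[C]_n) x : conjc (qform M x) = qform (ctr M) x.
Proof.
have -> : conjc (qform M x) = (ctr (ctr x *m M *m x)) 0 0 by rewrite /qform /ctr !mxE.
by rewrite /qform !ctrM ctrK mulmxA.
Qed.

Lemma sesqZr n (M : 'M[C]_n) x y (c : C) : sesq M x (c *: y) = c * sesq M x y.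
Proof. by rewrite /sesq -scalemxAr mxE. Qed.

Lemma sesqZl n (M : 'M[C]_n) x y (c : C) : sesq M (c *: x) y = conjc c * sesq M x y.
Proof. by rewrite /sesq ctrZ -!scalemxAl mxE. Qed.

Lemma Re_qform_combine n (M : 'M[C]_n) x y (c : C) :
  Re (qform M (x + c *: y)) =
  Re (qform M x) + (Re c ^+ 2 + Im c ^+ 2) * Re (qform M y)
  + Re (c * (sesq M x y + conjc (sesq M y x))).
Proof.
rewrite qformDr qformZr sesqZr sesqZl conjcM_self.
move: (qform M x) (qform M y) (sesq M x y) (sesq M y x) c => [? ?] [? ?] [? ?] [? ?] [? ?] /=.
ring.
Qed.

Lemma Re_sqnorm n (x : 'cV[C]_n) : Re (sqnorm x) = \sum_i (Re (x i 0) ^+ 2 + Im (x i 0) ^+ 2).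
Proof. by rewrite /sqnorm mxE Re_sum; apply: eq_bigr => i _; rewrite !mxE conjcM_self. Qed.

Lemma sqnorm_real n (x : 'cV[C]_n) : sqnorm x = (Re (sqnorm x))%:C.
Proof.
have : conjc (sqnorm x) = sqnorm x by rewrite -qform1 conjc_qform ctr1.
by case: (sqnorm x) => a b /= [] hb; congr Complex; lra.
Qed.

Lemma Re_sqnorm_ge0 n (x : 'cV[C]_n) : 0 <= Re (sqnorm x).
Proof. by rewrite Re_sqnorm sumr_ge0 // => i _; rewrite addr_ge0 ?sqr_ge0. Qed.

Lemma Re_sqnorm_eq0 n (x : 'cV[C]_n) : (Re (sqnorm x) == 0) = (x == 0).
Proof.
apply/idP/eqP => [|->]; last by rewrite -qform1 qform0r.
rewrite Re_sqnorm psumr_eq0 => [/allP x0|i _]; last by rewrite addr_ge0 ?sqr_ge0.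
apply/matrixP => i j; rewrite (ord1 j) mxE.
have /x0 : i \in index_enum 'I_n by rewrite mem_index_enum.
rewrite /= paddr_eq0 ?sqr_ge0 // !sqrf_eq0 => /andP[/eqP h1 /eqP h2].
by move: (x i 0) h1 h2 => [a b] /= -> ->.
Qed.

Lemma Re_sqnorm_gt0 n (x : 'cV[C]_n) : x != 0 -> 0 < Re (sqnorm x).
Proof. by rewrite lt_def Re_sqnorm_eq0 Re_sqnorm_ge0 andbT. Qed.

Definition unitv n (x : 'cV[C]_n) := Re (sqnorm x) = 1.

Lemma unitvE n (x : 'cV[C]_n) : sqnorm x = 1 <-> unitv x.
Proof. by rewrite /unitv; split => [->|h] //; rewrite sqnorm_real h. Qed.

Lemma unitv_neq0 n (x : 'cV[C]_n) : unitv x -> x != 0.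
Proof. by rewrite /unitv -Re_sqnorm_eq0 => ->; rewrite oner_eq0. Qed.

Lemma Re_qform_normalize n (x : 'cV[C]_n) : x != 0 ->
  exists2 u, unitv u & forall M, Re (qform M x) = Re (sqnorm x) * Re (qform M u).
Proof.
move=> x0; have s0 := Re_sqnorm_gt0 x0; set s := Re (sqnorm x) in s0 *.
have scale M : qform M ((Num.sqrt s)^-1%:C *: x) = s^-1%:C * qform M x.
  by rewrite qformZr_real exprVn sqr_sqrtr // ltW.
exists ((Num.sqrt s)^-1%:C *: x) => [|M].
  by rewrite /unitv -qform1 scale qform1 Re_realM mulVf // gt_eqF.
by rewrite scale Re_realM mulrA divff ?gt_eqF // mul1r.
Qed.

Lemma Re_qform_le_unit n (Mb Mq : 'M[C]_n) (tau : R) :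
  (forall u, unitv u -> tau * Re (qform Mb u) <= Re (qform Mq u)) ->
  forall x, tau * Re (qform Mb x) <= Re (qform Mq x).
Proof.
move=> le_unit x; have [->|x0] := eqVneq x 0; first by rewrite !qform0r mulr0.
have [u uu xu] := Re_qform_normalize x0.
by rewrite !xu mulrCA ler_wpM2l ?Re_sqnorm_ge0 ?le_unit.
Qed.

End QuadraticForms.

Section UnitSphere.
Local Open Scope classical_set_scope.
Local Open Scope ring_scope.
Local Open Scope complex_scope.
Variable R : realType.
Local Notation C := R[i].
Local Notation Re := (@complex.Re R).
Local Notation Im := (@complex.Im R).

(* Vectors of C^n are handled through their real coordinates in R^(n + n) (real parts
   first), where the unit sphere is compact. *)
Definition cvec_of_rV n (v : 'rV[R]_(n + n)) : 'cV[C]_n :=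
  \col_i (v 0 (lshift n i) +i* v 0 (rshift n i)).

Definition rV_of_cvec n (x : 'cV[C]_n) : 'rV[R]_(n + n) :=
  row_mx (\row_i Re (x i 0)) (\row_i Im (x i 0)).

Lemma rV_of_cvecK n : cancel (@rV_of_cvec n) (@cvec_of_rV n).
Proof.
move=> x; apply/matrixP => i j; rewrite (ord1 j) mxE.
by rewrite (row_mxEl (\row_k Re (x k 0))) (row_mxEr (\row_k Re (x k 0))) !mxE; case: (x i 0).
Qed.

Definition real_continuous n (f : 'cV[C]_n -> R) :=
  continuous (fun v : 'rV[R]_(n + n) => f (cvec_of_rV v)).

Definition ccontinuous m (F : 'rV[R]_m -> C) :=
  continuous (fun v => Re (F v)) /\ continuous (fun v => Im (F v)).

Lemma ccontinuous_cst m (c : C) : ccontinuous (fun _ : 'rV[R]_m => c).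
Proof. by split=> v; apply: cst_continuous. Qed.

Lemma ccontinuousD m (F G : 'rV[R]_m -> C) :
  ccontinuous F -> ccontinuous G -> ccontinuous (fun v => F v + G v).
Proof.
move=> [F1 F2] [G1 G2]; split=> v.
  have -> : (fun v => Re (F v + G v)) = (fun v => Re (F v) + Re (G v)).
    by apply/funext => w; case: (F w); case: (G w).
  exact: cvgD (F1 v) (G1 v).
have -> : (fun v => Im (F v + G v)) = (fun v => Im (F v) + Im (G v)).
  by apply/funext => w; case: (F w); case: (G w).
exact: cvgD (F2 v) (G2 v).
Qed.

Lemma ccontinuousM m (F G : 'rV[R]_m -> C) :
  ccontinuous F -> ccontinuous G -> ccontinuous (fun v => F v * G v).
Proof.
move=> [F1 F2] [G1 G2]; split=> v.
  have -> : (fun v => Re (F v * G v)) =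
            (fun v => Re (F v) * Re (G v) - Im (F v) * Im (G v)).
    by apply/funext => w; case: (F w); case: (G w).
  exact: cvgB (cvgM (F1 v) (G1 v)) (cvgM (F2 v) (G2 v)).
have -> : (fun v => Im (F v * G v)) =
          (fun v => Re (F v) * Im (G v) + Im (F v) * Re (G v)).
  by apply/funext => w; case: (F w); case: (G w) => ? ? ? ? /=; rewrite addrC.
exact: cvgD (cvgM (F1 v) (G2 v)) (cvgM (F2 v) (G1 v)).
Qed.

Lemma ccontinuousJ m (F : 'rV[R]_m -> C) :
  ccontinuous F -> ccontinuous (fun v => conjc (F v)).
Proof.
move=> [F1 F2]; split=> v.
  have -> : (fun v => Re (conjc (F v))) = (fun v => Re (F v)).
    by apply/funext => w; case: (F w).
  exact: F1.
have -> : (fun v => Im (conjc (F v))) = (fun v => - Im (F v)).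
  by apply/funext => w; case: (F w).
exact: cvgN (F2 v).
Qed.

Lemma ccontinuous_sum m (I : Type) (r : seq I) (F : I -> 'rV[R]_m -> C) :
  (forall i, ccontinuous (F i)) -> ccontinuous (fun v => \sum_(i <- r) F i v).
Proof.
move=> FC; elim: r => [|a r IH].
  by under eq_fun do rewrite big_nil; apply: ccontinuous_cst.
by under eq_fun do rewrite big_cons; apply: ccontinuousD.
Qed.

Lemma ccontinuous_coord n (i : 'I_n) : ccontinuous (fun v => cvec_of_rV v i 0).
Proof.
by split; under eq_fun do rewrite mxE /=; exact: coord_continuous.
Qed.

Lemma real_continuous_Re_qform n (M : 'M[C]_n) : real_continuous (fun x => Re (qform M x)).
Proof.
suff [] : ccontinuous (fun v => qform M (cvec_of_rV v)) by [].
rewrite /qform; under eq_fun do rewrite mxE.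
apply: ccontinuous_sum => j; apply: ccontinuousM; last exact: ccontinuous_coord.
under eq_fun do rewrite mxE.
apply: ccontinuous_sum => i; apply: ccontinuousM; last exact: ccontinuous_cst.
under eq_fun do rewrite 2!mxE.
exact/ccontinuousJ/ccontinuous_coord.
Qed.

Lemma unitv_coord_bound n (v : 'rV[R]_(n + n)) k :
  unitv (cvec_of_rV v) -> -1 <= v 0 k <= 1.
Proof.
rewrite /unitv Re_sqnorm => v1.
have sq1 i : Re (cvec_of_rV v i 0) ^+ 2 + Im (cvec_of_rV v i 0) ^+ 2 <= 1.
  rewrite -v1 (bigD1 i) //= lerDl sumr_ge0 // => j _.
  by rewrite addr_ge0 ?sqr_ge0.
suff : v 0 k ^+ 2 <= 1 by move=> ?; apply/andP; split; nra.
rewrite -(splitK k); case: (fintype.split k) => i /=; have := sq1 i;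
  rewrite !mxE /=; have := sqr_ge0 (v 0 (lshift n i)); have := sqr_ge0 (v 0 (rshift n i)); lra.
Qed.

Lemma unit_sphere_max n (f g : 'cV[C]_n -> R) :
  real_continuous f -> real_continuous g -> (exists2 x, unitv x & 0 <= g x) ->
  exists x0, [/\ unitv x0, 0 <= g x0 & forall x, unitv x -> 0 <= g x -> f x <= f x0].
Proof.
move=> fC gC [x1 x1u gx1].
have sqC : real_continuous (fun x : 'cV[C]_n => Re (sqnorm x)).
  by rewrite /real_continuous; under eq_fun do rewrite -qform1; apply: real_continuous_Re_qform.
pose K := (fun v => Re (sqnorm (cvec_of_rV v))) @^-1` [set 1] `&`
          (fun v => g (cvec_of_rV v)) @^-1` [set r | 0 <= r].
have K_closed : closed K.
  apply: closedI; first by apply: (proj1 (continuous_closedP _) sqC); apply: closed_eq.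
  by apply: (proj1 (continuous_closedP _) gC); apply: closed_ge.
have K_compact : compact K.
  apply: (subclosed_compact K_closed).
    by apply: (@rV_compact _ _ (fun=> `[(-1 : R), 1]%classic)) => _; apply: segment_compact.
  by move=> v [v1 _] i; rewrite /= in_itv /=; apply: unitv_coord_bound.
have K0 : K !=set0 by exists (rV_of_cvec x1); rewrite /K /= rV_of_cvecK.
have [c /set_mem[c1 c2] cmax] := compact_EVT_max K0 K_compact (continuous_subspaceT fC).
exists (cvec_of_rV c); split => // x xu gx.
by have := cmax (rV_of_cvec x); rewrite !rV_of_cvecK; apply; rewrite inE /K /= rV_of_cvecK.
Qed.

Lemma unit_sphere_min n (f : 'cV[C]_n -> R) :
  real_continuous f -> (exists x : 'cV[C]_n, unitv x) ->
  exists2 x0, unitv x0 & forall x, unitv x -> f x0 <= f x.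
Proof.
move=> fC [z zu].
have [|||x0 [x0u _ x0max]] := @unit_sphere_max n (fun x => - f x) (fun=> 0).
- by move=> v; exact: cvgN (fC v).
- by move=> v; apply: cst_continuous.
- by exists z.
by exists x0 => // x xu; rewrite -lerN2 x0max.
Qed.

End UnitSphere.

Arguments real_continuous_Re_qform {R n} M.

Section SLemma.
Local Open Scope classical_set_scope.
Local Open Scope ring_scope.
Local Open Scope complex_scope.
Variable R : realType.
Local Notation C := R[i].
Local Notation Re := (@complex.Re R).
Local Notation Im := (@complex.Im R).

Lemma unit_rotation (k1 k2 : C) :
  exists c : C, [/\ Re c ^+ 2 + Im c ^+ 2 = 1, Re (c * k1) = 0 & Re (c * k2) <= 0].
Proof.
suff [c c1 ck1] : exists2 c : C, Re c ^+ 2 + Im c ^+ 2 = 1 & Re (c * k1) = 0.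
  have [ck2|ck2] := lerP (Re (c * k2)) 0; first by exists c.
  exists (- c); rewrite !mulNr.
  by move: c c1 ck1 ck2 => [? ?] /=; rewrite !sqrrN => c1 ck1 ck2; split=> //; lra.
case: k1 => a b; have [ab0|ab0] := eqVneq (a ^+ 2 + b ^+ 2) 0.
  exists 1; first by rewrite /= expr1n expr0n addr0.
  by rewrite mul1r /=; apply/eqP; rewrite -sqrf_eq0; apply/eqP; nra.
have ab_gt0 : 0 < a ^+ 2 + b ^+ 2 by rewrite lt_def ab0 addr_ge0 ?sqr_ge0.
set r := Num.sqrt (a ^+ 2 + b ^+ 2).
have r0 : 0 < r by rewrite sqrtr_gt0.
exists ((b / r) +i* (a / r)) => /=; last by field; lra.
by rewrite !expr_div_n sqr_sqrtr ?ltW // -mulrDl addrC divff.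
Qed.

Variables (n : nat) (Mb Mq : 'M[C]_n).
Local Notation b x := (Re (qform Mb x)).
Local Notation q x := (Re (qform Mq x)).

Lemma Re_qform_zero_crossing x y :
  b x < 0 -> 0 < b y ->
  exists w, b w = 0 /\ q w <= b y * q x - b x * q y.
Proof.
move=> bx by_; set a := Num.sqrt (b y); set d := Num.sqrt (- b x).
have a2 : a ^+ 2 = b y by rewrite sqr_sqrtr // ltW.
have d2 : d ^+ 2 = - b x by rewrite sqr_sqrtr // oppr_ge0 ltW.
(* w := a x + c (d y) with |c| = 1, where c cancels the cross term of b and makes that
   of q nonpositive. *)
pose K M := sesq M (a%:C *: x) (d%:C *: y) + conjc (sesq M (d%:C *: y) (a%:C *: x)).
have [c [c1 cb cq]] := unit_rotation (K Mb) (K Mq).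
exists (a%:C *: x + c *: (d%:C *: y)).
rewrite !(Re_qform_combine _ (a%:C *: x) (d%:C *: y) c) c1 cb mul1r.
rewrite !qformZr_real !Re_realM a2 d2 -/(K Mq).
by split; [ring | lra].
Qed.

Lemma S_lemma :
  (exists y, 0 < b y) ->
  (forall x, 0 <= b x -> 0 <= q x) ->
  exists2 tau, 0 <= tau & forall x, tau * b x <= q x.
Proof.
move=> [y by0] q_ge0.
(* The ratios q/b on b < 0 lie below those on b > 0 by the zero-crossing lemma; tau
   separates them. *)
pose T := [set r : R | r = 0 \/ exists2 x, b x < 0 & r = q x / b x].
have T_ub z : 0 < b z -> forall r, T r -> r <= q z / b z.
  move=> bz r [->|[x bx ->]]; first by rewrite divr_ge0 ?q_ge0 ?ltW.
  have [w [bw qw]] := Re_qform_zero_crossing bx bz.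
  have qw0 : 0 <= q w by apply: q_ge0; rewrite bw.
  by rewrite ler_ndivrMr // mulrAC ler_pdivrMr //; nra.
have T_sup : has_sup T by split; [exists 0; left | exists (q y / b y); exact: T_ub].
exists (sup T) => [|x]; first by apply: sup_upper_bound => //; left.
have [bx|bx|bx] := ltgtP (b x) 0.
- have : q x / b x <= sup T by apply: sup_upper_bound => //; right; exists x.
  by rewrite ler_ndivrMr.
- have : sup T <= q x / b x by apply: ge_sup; [exists 0; left | exact: T_ub].
  by rewrite ler_pdivlMr.
- by rewrite bx mulr0; apply: q_ge0; rewrite bx.
Qed.

Lemma S_lemma_degenerate :
  (forall x, b x <= 0) ->
  (forall x, unitv x -> b x = 0 -> 0 < q x) ->
  exists2 tau, 0 <= tau & forall x, tau * b x <= q x.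
Proof.
move=> bneg q_pos.
suff [tau tau0 tau_le] : exists2 tau, 0 <= tau & forall u, unitv u -> tau * b u <= q u.
  by exists tau => //; apply: Re_qform_le_unit.
have [[z zu]|no_unit] := pselect (exists z : 'cV[C]_n, unitv z); last first.
  by exists 0 => // u uu; case: no_unit; exists u.
(* The minimum d > 0 of h on the unit sphere lets tau = max(0, -min q) / d work. *)
pose h x := Num.max (- b x) (q x).
have h_pos u : unitv u -> 0 < h u.
  move=> uu; rewrite lt_max; have [bu|bu] := eqVneq (b u) 0; first by rewrite q_pos ?orbT.
  by rewrite oppr_gt0 lt_neqAle bu bneg.
have [x0 x0u x0min] : exists2 x0, unitv x0 & forall x, unitv x -> h x0 <= h x.
  apply: unit_sphere_min; last by exists z.
  have bC : real_continuous (fun x => - b x).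
    by move=> v; exact: cvgN (real_continuous_Re_qform Mb v).
  by move=> v; exact: continuous_max (bC v) (real_continuous_Re_qform Mq v).
have [x1 x1u x1min] : exists2 x1, unitv x1 & forall x, unitv x -> q x1 <= q x.
  by apply: unit_sphere_min; [apply: real_continuous_Re_qform | exists z].
set d := h x0; have d0 : 0 < d := h_pos _ x0u.
set c := Num.max 0 (- q x1).
have c0 : 0 <= c by rewrite le_max lexx.
have qc : - q x1 <= c by rewrite le_max lexx orbT.
exists (c / d) => [|u uu]; first by rewrite divr_ge0 // ltW.
have du : d <= h u := x0min u uu.
have qu := x1min u uu.
have [bd|bd] := lerP d (- b u).
  have : c <= c / d * (- b u).
    by rewrite -[c in c <= _](divfK (lt0r_neq0 d0)) ler_wpM2l // divr_ge0 // ltW.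
  by rewrite mulrN; lra.
have : d <= q u by move: du; rewrite /h le_max => /orP[|//]; lra.
have : 0 <= c / d * (- b u) by rewrite mulr_ge0 ?divr_ge0 ?oppr_ge0 ?bneg // ltW.
by rewrite mulrN; lra.
Qed.

Lemma S_lemma_strict :
  (forall x, unitv x -> 0 <= b x -> 0 < q x) ->
  exists2 tau, 0 <= tau & forall x, tau * b x <= q x.
Proof.
move=> q_pos; have [slater|no_slater] := pselect (exists y, 0 < b y).
  apply: S_lemma => // x; have [->|x0] := eqVneq x 0; first by rewrite !qform0r.
  have [u uu xu] := Re_qform_normalize x0; have s0 := Re_sqnorm_gt0 x0.
  by rewrite !xu !pmulr_rge0 // => /(q_pos _ uu) /ltW.
apply: S_lemma_degenerate => [x|x xu bx]; last by apply: q_pos; rewrite ?bx.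
by rewrite leNgt; apply/negP => bx; apply: no_slater; exists x.
Qed.

End SLemma.

Lemma inf_lb_approx (R : realType) (S : set R) (m : R) :
  (forall e, 0 < e -> S (m + e)) -> (forall g, S g -> m <= g) -> inf S = m.
Proof.
move=> Sm mS; have S0 : (S !=set0)%classic by exists (m + 1); apply: Sm.
apply/eqP; rewrite eq_le lb_le_inf // andbT leNgt; apply/negP => mI.
have : inf S <= m + (inf S - m) / 2.
  by apply: ge_inf; [exists m | apply: Sm; rewrite divr_gt0 // subr_gt0].
lra.
Qed.

Section SDP.
Variable R : realType.
Local Notation C := R[i].
Local Notation Re := (@complex.Re R).
Local Notation Im := (@complex.Im R).

Definition sector_form n (A : 'M[C]_n) (t s : R) x :=
  - t * Re (qform A x) + s * Im (qform A x).

Lemma sector_formE n (A : 'M[C]_n) t s x :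
  sector_form A t s x = Re (qform (((- t) -i* s) *: A) x).
Proof. by rewrite qformZl /sector_form; case: (qform A x) => a b /=; ring. Qed.

Lemma qform_herm_part n (A : 'M[C]_n) x : qform (herm_part A) x = (Re (qform A x))%:C.
Proof.
by rewrite /herm_part qformZl qformDl -conjc_qform addcJ mulKf // pnatr_eq0.
Qed.

Lemma qform_skew_part n (A : 'M[C]_n) x : qform (skew_part A) x = (Im (qform A x))%:C.
Proof.
rewrite /skew_part qformZl qformDl qformNl -conjc_qform subcJ mulrAC mulKf //.
by rewrite mulf_neq0 ?pnatr_eq0 //; apply/eqP; case; apply/eqP; rewrite oner_eq0.
Qed.

Lemma qform_sdp n (A : 'M[C]_n) (g tau t s : R) x :
  qform (ctr A *m A - g%:C%:M + tau%:C *: (- (t%:C *: herm_part A) + s%:C *: skew_part A)) x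
  = (Re (sqnorm (A *m x)) - g * Re (sqnorm x) + tau * sector_form A t s x)%:C.
Proof.
move: (qform_herm_part A x) (qform_skew_part A x).
move: (herm_part A) (skew_part A) => H K qH qK.
rewrite !(qformDl, qformNl, qformZl) qform_ctrM qform_scalar qH qK.
rewrite (sqnorm_real (A *m x)) (sqnorm_real x) /sector_form.
move: (Re _) (Re _) (qform A x) => a b [z1 z2] /=.
by apply/eqP; rewrite eq_complex /=; apply/andP; split; apply/eqP; ring.
Qed.

Lemma lec0R (k : R) : (k%:C <= 0 :> C) = (k <= 0).
Proof. by rewrite lecE /= eqxx. Qed.

Lemma Re_qform_slack n (A : 'M[C]_n) (g : R) x :
  Re (qform (g%:C%:M - ctr A *m A) x) = g * Re (sqnorm x) - Re (sqnorm (A *m x)).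
Proof.
rewrite qformDl qformNl qform_scalar qform_ctrM (sqnorm_real x).
by case: (sqnorm (A *m x)) => a b /=; ring.
Qed.

Variables (n : nat) (A : 'M[C]_n) (th s : R).
Local Notation b x := (sector_form A (tan th) s x).
Local Notation N x := (Re (sqnorm (A *m x))).
Local Notation value := (inf (sdp_feasible A th s)).

Lemma sdp_feasible_ub g x :
  sdp_feasible A th s g -> unitv x -> 0 <= b x -> N x <= g.
Proof.
move=> [_ [tau [tau0 tau_nsd]]] xu bx.
have := tau_nsd x; rewrite qform_sdp lec0R xu mulr1.
have : 0 <= tau * b x by rewrite mulr_ge0.
lra.
Qed.

Lemma sdp_feasible_approx mu :
  0 <= mu -> (forall x, unitv x -> 0 <= b x -> N x <= mu) ->
  forall e, 0 < e -> sdp_feasible A th s (mu + e).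
Proof.
move=> mu0 mu_ub e e0.
have [|tau tau0 tau_le] := @S_lemma_strict R n (((- tan th) -i* s) *: A)
    ((mu + e)%:C%:M - ctr A *m A).
  by move=> x xu; rewrite -sector_formE Re_qform_slack xu mulr1 => /(mu_ub x xu); lra.
split; first by rewrite addr_ge0 // ltW.
exists tau; split=> // x; rewrite qform_sdp lec0R.
by have := tau_le x; rewrite -sector_formE Re_qform_slack; lra.
Qed.

Lemma sdp_value_max x0 :
  unitv x0 -> 0 <= b x0 -> (forall x, unitv x -> 0 <= b x -> N x <= N x0) -> value = N x0.
Proof.
move=> x0u bx0 x0max; apply: inf_lb_approx => [|g gF].
  exact/sdp_feasible_approx/x0max/Re_sqnorm_ge0.
exact: sdp_feasible_ub gF x0u bx0.
Qed.

Lemma sdp_value_empty : ~ (exists2 x, unitv x & 0 <= b x) -> value = 0.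
Proof.
move=> empty; apply: inf_lb_approx => [|g []//].
by apply: sdp_feasible_approx => // x xu bx; case: empty; exists x.
Qed.

Lemma sector_gain_max :
  (exists2 x, unitv x & 0 <= b x) ->
  exists x0, [/\ unitv x0, 0 <= b x0 & forall x, unitv x -> 0 <= b x -> N x <= N x0].
Proof.
move=> [x xu bx]; apply: unit_sphere_max; last by exists x.
- rewrite /real_continuous; under eq_fun do rewrite -qform_ctrM.
  exact: real_continuous_Re_qform.
- rewrite /real_continuous; under eq_fun do rewrite sector_formE.
  exact: real_continuous_Re_qform.
Qed.

Lemma sdp_value_attained :
  (exists2 x, unitv x & 0 <= b x) -> exists x, [/\ unitv x, 0 <= b x & value = N x].
Proof.
by move=> /sector_gain_max[x0 [x0u bx0 x0max]]; exists x0; split=> //; apply: sdp_value_max.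
Qed.

Lemma sdp_value_pos_attained :
  0 < value -> exists x, [/\ unitv x, 0 <= b x & value = N x].
Proof.
move=> v0; apply: sdp_value_attained; apply: contrapT => empty.
by move: v0; rewrite sdp_value_empty // ltxx.
Qed.

Lemma sdp_value_ge x : unitv x -> 0 <= b x -> N x <= value.
Proof.
move=> xu bx; have [x0 [x0u bx0 x0max]] := @sector_gain_max (ex_intro2 _ _ x xu bx).
by rewrite (sdp_value_max x0u bx0 x0max) x0max.
Qed.

End SDP.

Section Angles.
Variable R : realType.
Local Notation C := R[i].
Local Notation Re := (@complex.Re R).
Local Notation Im := (@complex.Im R).

Lemma is_angleE (z : C) phi : is_angle z phi ->
  Re z = Num.sqrt (Re z ^+ 2 + Im z ^+ 2) * cos phi /\
  Im z = Num.sqrt (Re z ^+ 2 + Im z ^+ 2) * sin phi.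
Proof. by move=> [_ zE]; split; rewrite [in LHS]zE normc_def ?Re_realM ?Im_realM. Qed.

Lemma is_angle_atan (z : C) : 0 < Re z -> is_angle z (atan (Im z / Re z)).
Proof.
case: z => a b /= a0; set u := b / a.
have w0 : 0 < Num.sqrt (1 + u ^+ 2) by rewrite sqrtr_gt0 ltr_pwDl ?sqr_ge0.
have normE : Num.sqrt (a ^+ 2 + b ^+ 2) = a * Num.sqrt (1 + u ^+ 2).
  have -> : a ^+ 2 + b ^+ 2 = a ^+ 2 * (1 + u ^+ 2) by rewrite /u; field; rewrite gt_eqF.
  by rewrite sqrtrM ?sqr_ge0 // sqrtr_sqr ger0_norm // ltW.
set w := Num.sqrt (1 + u ^+ 2) in w0 normE.
have cosu : cos (atan u) = w^-1 by rewrite cos_atan.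
have sinu : sin (atan u) = u / w.
  by have := atanK u; rewrite /tan cosu invrK => {2}<-; rewrite mulfK // gt_eqF.
split.
  have pi0 := pi_gt0 R; have := atan_gtNpi2 u; have := atan_ltpi2 u.
  by move=> ? ?; apply/andP; split; lra.
rewrite normc_def /= normE /expj cosu sinu.
apply/eqP; rewrite eq_complex /=; apply/andP; split; apply/eqP.
  by field; rewrite gt_eqF.
by rewrite /u; field; rewrite !gt_eqF.
Qed.

Lemma tan_mul_cos_le_sin (th phi : R) :
  0 <= th < pi / 2 -> th <= phi -> phi * 2 < pi * 3 -> 0 < cos phi ->
  tan th * cos phi <= sin phi.
Proof.
move=> /andP[th0 th_lt] th_phi phi3 cos0; have pi0 := pi_gt0 R.
have cth : 0 < cos th by apply: cos_gt0_pihalf; apply/andP; split; lra.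
have phi_lt : phi < pi / 2.
  rewrite ltNge; apply/negP => phi_ge.
  have : 0 <= sin (phi - pi / 2) by apply: sin_ge0_pi; apply/andP; split; lra.
  by rewrite sinBpihalf; lra.
have : 0 <= sin (phi - th) by apply: sin_ge0_pi; apply/andP; split; lra.
by rewrite sinB /tan mulrAC ler_pdivrMr //; lra.
Qed.

Lemma sector_angle_excluded (th s phi : R) (z : C) :
  0 <= th < pi / 2 -> (s = 1 \/ s = -1) -> z != 0 ->
  0 <= - tan th * Re z + s * Im z -> is_angle z phi -> ~ (- th < phi < th).
Proof.
move=> /andP[th0 th_lt] s1 z0 bz /is_angleE[reE imE] /andP[phi1 phi2].
have pi0 := pi_gt0 R.
have cth : 0 < cos th by apply: cos_gt0_pihalf; apply/andP; split; lra.
set rho := Num.sqrt _ in reE imE.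
have rho0 : 0 < rho.
  rewrite sqrtr_gt0 lt_def paddr_eq0 ?sqr_ge0 // !sqrf_eq0 addr_ge0 ?sqr_ge0 // andbT.
  apply: contra z0 => /andP[/eqP re0 /eqP im0]; apply/eqP.
  by move: re0 im0; case: (z) => a b /= -> ->.
have : 0 <= s * (sin phi * cos th) - sin th * cos phi.
  have -> : s * (sin phi * cos th) - sin th * cos phi
          = cos th / rho * (- tan th * Re z + s * Im z).
    by rewrite reE imE /tan; field; rewrite !gt_eqF.
  by rewrite mulr_ge0 // divr_ge0 // ltW.
case: s1 => ->; rewrite ?mul1r ?mulN1r.
  have : sin (phi - th) < 0.
    by rewrite -[phi - th]opprK sinN oppr_lt0 sin_gt0_pi //; apply/andP; split; lra.
  by rewrite sinB; lra.
have : 0 < sin (phi + th) by apply: sin_gt0_pi; apply/andP; split; lra.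
by rewrite sinD; lra.
Qed.

Lemma angle_excluded_sector (th : R) (z : C) :
  0 <= th < pi / 2 -> 0 < Re z ->
  (forall phi, is_angle z phi -> ~ (- th < phi < th)) ->
  0 <= - tan th * Re z + Im z \/ 0 <= - tan th * Re z + (- 1) * Im z.
Proof.
move=> /andP[th0 th_lt] z0 zout; have pi0 := pi_gt0 R.
have tanK_th : atan (tan th) = th by apply: tanK; rewrite in_itv /=; apply/andP; split; lra.
have [th_le|lt_th] := lerP th (atan (Im z / Re z)).
  left; have : tan th <= Im z / Re z.
    by rewrite leNgt; apply/negP => /lt_atan; rewrite tanK_th; lra.
  by rewrite ler_pdivlMr //; lra.
right; have ang : atan (Im z / Re z) <= - th.
  by rewrite leNgt; apply/negP => ?; apply: zout (is_angle_atan z0) _; apply/andP.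
have : Im z / Re z <= - tan th.
  by rewrite leNgt; apply/negP => /lt_atan; rewrite atanN tanK_th; lra.
by rewrite ler_pdivrMr //; lra.
Qed.

End Angles.

Section Accretive.
Variable R : realType.
Local Notation C := R[i].
Local Notation Re := (@complex.Re R).
Local Notation Im := (@complex.Im R).

Lemma qform_diag_mx n (d : 'rV[C]_n) y :
  qform (diag_mx d) y = \sum_j conjc (y j 0) * y j 0 * d 0 j.
Proof. by rewrite /qform mul_mx_diag mxE; apply: eq_bigr => j _; rewrite !mxE mulrAC. Qed.

Lemma Re_qform_diag_expj n (phi : 'I_n -> R) y :
  Re (qform (diag_mx (\row_k expj (phi k))) y) =
  \sum_j (Re (y j 0) ^+ 2 + Im (y j 0) ^+ 2) * cos (phi j).
Proof.
by rewrite qform_diag_mx Re_sum; apply: eq_bigr => j _; rewrite conjcM_self mxE Re_realM.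
Qed.

Lemma accretive_Re_qform_gt0 n (A : 'M[C]_n) x :
  accretive A -> x != 0 -> 0 < Re (qform A x).
Proof.
move=> [_ [phi [[[T [Tu AE]] _] phi_bd]]] x0.
have cos_gt0 j : 0 < cos (phi j) by apply: cos_gt0_pihalf.
have y0 : T *m x != 0 by apply: contra_neq x0 => Tx0; rewrite -(mulKmx Tu x) Tx0 mulmx0.
rewrite AE qform_ctrMl Re_qform_diag_expj lt_def sumr_ge0 ?andbT => [|j _]; last first.
  by rewrite mulr_ge0 ?addr_ge0 ?sqr_ge0 // ltW.
rewrite psumr_eq0 => [|j _]; last by rewrite mulr_ge0 ?addr_ge0 ?sqr_ge0 // ltW.
apply: contra y0 => /allP all0; rewrite -Re_sqnorm_eq0 Re_sqnorm psumr_eq0 => [|j _].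
  by apply/allP => j jn; have := all0 j jn; rewrite mulf_eq0 (gt_eqF (cos_gt0 j)) orbF.
by rewrite addr_ge0 ?sqr_ge0.
Qed.

Lemma phases_qform_delta n (A : 'M[C]_n) (phi : 'I_n -> R) (T : 'M[C]_n) k :
  T \in unitmx -> A = ctr T *m diag_mx (\row_j expj (phi j)) *m T ->
  qform A (invmx T *m delta_mx k 0) = expj (phi k).
Proof.
move=> Tu ->; rewrite qform_ctrMl mulKVmx // qform_diag_mx (bigD1 k) //= big1 => [|j jk].
  by rewrite !mxE !eqxx conjc1 !mul1r addr0.
by rewrite !mxE (negPf jk) conjc0 !mul0r.
Qed.

Lemma exists_sector_vec n (A : 'M[C]_n) (phi : 'I_n -> R) (th : R) :
  accretive A -> phases A phi -> 0 <= th < pi / 2 -> in_phase_range phi th ->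
  exists2 x, unitv x & 0 <= sector_form A (tan th) 1 x.
Proof.
move=> acc [[T [Tu AE]] [imax [imin [phi_bd [spread mid]]]]] th_bd [_ [i th_le]].
pose x : 'cV[C]_n := invmx T *m delta_mx imax 0.
have qx : qform A x = expj (phi imax) by apply: phases_qform_delta.
have x0 : x != 0.
  apply: contra_eq_neq qx => ->.
  by rewrite qform0r eq_sym -normr_eq0 normc_def /= cos2Dsin2 sqrtr1 oner_eq0.
have cos_gt0 : 0 < cos (phi imax) by have := accretive_Re_qform_gt0 acc x0; rewrite qx.
have bx : 0 <= sector_form A (tan th) 1 x.
  rewrite /sector_form qx /= mul1r mulNr addrC subr_ge0; apply: tan_mul_cos_le_sin => //.
    by apply: le_trans th_le _; case/andP: (phi_bd i).
  (* [phi] need not be the phases witnessing accretivity; [phi imax < 3 pi / 2] comes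
     from the normalisation in [phases]. *)
  by case/andP: (phi_bd imin) => _ ?; case/andP: mid => _ ?; lra.
have [u uu xu] := Re_qform_normalize x0.
by exists u => //; move: bx; rewrite !sector_formE xu pmulr_rge0 // Re_sqnorm_gt0.
Qed.

Lemma gain_range_sector n (A : 'M[C]_n) th s x :
  accretive A -> 0 <= th < pi / 2 -> (s = 1 \/ s = -1) -> unitv x ->
  0 <= sector_form A (tan th) s x -> gain_range A th (Num.sqrt (Re (sqnorm (A *m x)))).
Proof.
move=> acc th_bd s1 xu bx; split; first exact: sqrtr_ge0.
exists (qform A x); split.
  move=> phi; apply: (sector_angle_excluded (s := s)) => //.
  by apply/eqP => q0; have := accretive_Re_qform_gt0 acc (unitv_neq0 xu); rewrite q0 ltxx.
exists x; split; first exact/unitvE.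
by split=> //; rewrite sqr_sqrtr ?Re_sqnorm_ge0 // -sqnorm_real.
Qed.

Lemma gain_range_sector_split n (A : 'M[C]_n) th h :
  accretive A -> 0 <= th < pi / 2 -> gain_range A th h ->
  exists2 x, unitv x & h = Num.sqrt (Re (sqnorm (A *m x))) /\
    (0 <= sector_form A (tan th) 1 x \/ 0 <= sector_form A (tan th) (-1) x).
Proof.
move=> acc th_bd [h0 [z [zout [x [/unitvE xu [qx Ax]]]]]].
exists x => //; split; first by rewrite Ax sqrtr_sqr ger0_norm.
rewrite /sector_form qx mul1r; apply: angle_excluded_sector => //.
by rewrite -qx; apply: accretive_Re_qform_gt0 acc (unitv_neq0 xu).
Qed.

End Accretive.

Theorem proposition4 (R : realType) (n : nat) (A : 'M[R[i]]_n) (theta : R)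
  (phi : 'I_n -> R) :
  accretive A -> phases A phi -> 0 <= theta < pi / 2 -> in_phase_range phi theta ->
  is_max_of (gain_range A theta)
    (Num.max (Num.sqrt (inf (sdp_feasible A theta 1)))
             (Num.sqrt (inf (sdp_feasible A theta (-1))))).
Proof.
move=> acc ph th_bd th_in.
have [x1 [x1u b1 v1]] := sdp_value_attained (exists_sector_vec acc ph th_bd th_in).
split.
  have [v21|v12] := lerP (inf (sdp_feasible A theta (-1))) (inf (sdp_feasible A theta 1)).
    rewrite max_l ?ler_wsqrtr // v1.
    exact: gain_range_sector acc th_bd (or_introl erefl) x1u b1.
  rewrite max_r ?ler_wsqrtr ?ltW //.
  have v1_ge0 : 0 <= inf (sdp_feasible A theta 1) by rewrite v1 Re_sqnorm_ge0.
  have [x2 [x2u b2 ->]] := sdp_value_pos_attained (le_lt_trans v1_ge0 v12).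
  exact: gain_range_sector acc th_bd (or_intror erefl) x2u b2.
move=> h /(gain_range_sector_split acc th_bd)[x xu [-> [bx|bx]]];
  rewrite le_max; apply/orP; [left | right]; apply: ler_wsqrtr; exact: sdp_value_ge xu bx.
Qed.
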